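(* Let $(J,F,Y)$ be a pullback triple with Hilbert spaces $\mathcal H,\mathcal X,\mathcal E$. Then: (i) the inverse $Y^{-1}:\mathcal R(Y)\subset\mathcal X\to\mathcal H$ is closable and $J=\overline{Y^{-1}}$; (ii) $Y$ is closable if and only if $J$ is injective, and in this case $\overline{Y}=J^{-1}$; (iii) $Y$ is bounded if and only if $J$ is an isomorphism.
   Context: For Hilbert spaces $\mathcal H,\mathcal X,\mathcal E$, a pullback triple $(J,F,Y)$ consists of operators $J:\mathcal X\to\mathcal H$, $F:\mathcal X\to\mathcal E$, $Y:\mathcal H\to\mathcal X$ such that: $J,F$ are bounded with dense range; $Y$ is a completion operator (densely defined injective linear map with dense range, not necessarily closable); $\|u\|_{\mathcal X}^2=\|Ju\|^2_{\mathcal H}+\|Fu\|_{\mathcal E}^2$ for all $u\in\mathcal X$; and $JYf=f$ for all $f\in\mathcal D(Y)$. *)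

From HB Require Import structures.
From mathcomp Require Import all_boot all_order all_algebra.
From mathcomp Require Import all_classical all_reals all_analysis.
Set Implicit Arguments. Unset Strict Implicit. Unset Printing Implicit Defensive.
Import Order.TTheory GRing.Theory Num.Theory.
Import numFieldNormedType.Exports.
Local Open Scope classical_set_scope.
Local Open Scope ring_scope.

Definition is_inner_product (K : numClosedFieldType) (V : normedModType K)
  (ip : V -> V -> K) : Prop :=
  [/\ forall (a : K) (x y z : V), ip (a *: x + y) z = a * ip x z + ip y z,
      forall x y : V, ip y x = (ip x y)^* &
      forall x : V, `|x| ^+ 2 = ip x x].

Definition is_hilbert (K : numClosedFieldType) (V : completeNormedModType K)
  (ip : V -> V -> K) : Prop := is_inner_product ip.

Definition is_subspace (K : numDomainType) (V : lmodType K) (D : set V) : Prop :=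
  [/\ D 0, forall x y, D x -> D y -> D (x + y) & forall (a : K) x, D x -> D (a *: x)].

Definition linear_on (K : numDomainType) (V W : lmodType K) (D : set V) (Y : V -> W)
  : Prop := forall (a : K) x y, D x -> D y -> Y (a *: x + y) = a *: Y x + Y y.

Definition completion_operator (K : numFieldType) (H X : normedModType K)
  (D : set H) (Y : H -> X) : Prop :=
  [/\ is_subspace D, linear_on D Y, dense D,
      (forall f g, D f -> D g -> Y f = Y g -> f = g) & dense (Y @` D)].

Definition bounded_dense_range (K : numFieldType) (U V : normedModType K)
  (T : {linear U -> V}) : Prop := continuous T /\ dense (range T).

Definition pullback_triple (K : numFieldType) (H X E : normedModType K)
  (J : {linear X -> H}) (F : {linear X -> E}) (D : set H) (Y : H -> X) : Prop :=
  [/\ bounded_dense_range J, bounded_dense_range F, completion_operator D Y,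
      (forall u : X, `|u| ^+ 2 = `|J u| ^+ 2 + `|F u| ^+ 2) &
      (forall f, D f -> J (Y f) = f)].

Definition graph_on (A B : Type) (D : set A) (T : A -> B) : set (A * B) :=
  [set p | exists2 a, D a & p = (a, T a)].

Definition inv_graph_on (A B : Type) (D : set A) (T : A -> B) : set (B * A) :=
  [set p | exists2 a, D a & p = (T a, a)].

(* an operator given by its graph G is closable iff the closure of its graph is
   again the graph of an operator (i.e. is single-valued) *)
Definition closable (A B : topologicalType) (G : set (A * B)) : Prop :=
  forall a b1 b2, closure G (a, b1) -> closure G (a, b2) -> b1 = b2.

Definition bounded_on (K : numFieldType) (U V : normedModType K) (D : set U)
  (T : U -> V) : Prop := exists C : K, forall x, D x -> `|T x| <= C * `|x|.

Definition isomorphism (K : numFieldType) (U V : normedModType K)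
  (T : {linear U -> V}) : Prop :=
  continuous T /\
  exists S : {linear V -> U}, [/\ continuous S, cancel T S & cancel S T].

From HB Require Import structures.
From mathcomp Require Import all_boot all_order all_algebra.
From mathcomp Require Import all_classical all_reals all_analysis.
From mathcomp Require Import ring.
Set Implicit Arguments.
Unset Strict Implicit.
Unset Printing Implicit Defensive.
Import Order.TTheory GRing.Theory Num.Theory.
Import numFieldNormedType.Exports.
Local Open Scope classical_set_scope.
Local Open Scope ring_scope.

(* Because J is continuous and J (Y f) = f on D(Y), the graph of Y^-1 and the
   graph of Y are the images of the dense set Y(D(Y)) under the continuous maps
   u |-> (u, J u) and u |-> (J u, u), whose ranges are closed.  Their closures
   are therefore the graph of J and the graph of J^-1 (as a relation), which
   gives (i) and (ii).  For (iii), a bound |Y f| <= c |f| persists on the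
   closure of the graph of Y, i.e. |u| <= c |J u|; and since X is complete the
   bounded densely defined Y extends to all of H, so that every h is some J u.
   A surjective bounded-below operator is an isomorphism. *)

Lemma dense_closureT (T : topologicalType) (A : set T) :
  dense A -> closure A = setT.
Proof.
move=> dA; apply/seteqP; split=> // x _ B xB.
have [y [By Ay]] := dA B° (ex_intro _ x xB) (@open_interior _ B).
by exists y; split => //; exact: interior_subset.
Qed.

Lemma closure_image_dense (T U : topologicalType) (f : T -> U) (A : set T) :
  continuous f -> dense A -> closed (range f) -> closure (f @` A) = range f.
Proof.
move=> fc dA closed_f; apply/seteqP; split.
  by rewrite [X in _ `<=` X](closure_id _).1 //; apply: closureS => _ [x _ <-].
have closed_pre := (continuous_closedP f).1 fc _ (@closed_closure _ (f @` A)).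
have : closure A `<=` f @^-1` closure (f @` A).
  rewrite [X in _ `<=` X](closure_id _).1 //; apply: closureS => x Ax.
  by apply: subset_closure; exists x.
by rewrite dense_closureT // => sub _ [x _ <-]; exact: sub.
Qed.

Lemma closed_eq_continuous (T : topologicalType) (K : numFieldType)
    (V : normedModType K) (f g : T -> V) :
  continuous f -> continuous g -> closed [set x | f x = g x].
Proof.
move=> fc gc; have -> : [set x | f x = g x] = (f - g) @^-1` [set 0].
  apply/seteqP; split => x /=; rewrite !fctE.
    by move=> ->; rewrite subrr.
  by move/eqP; rewrite subr_eq0 => /eqP.
have fgc : continuous (f - g) by move=> x; exact: cvgB (fc x) (gc x).
apply: (continuous_closedP _).1 fgc _ _.
apply: accessible_closed_set1; apply: hausdorff_accessible.
exact: norm_hausdorff.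
Qed.

Section DenseGraphClosure.
Variables (K : numFieldType) (H X : normedModType K) (J : X -> H)
  (D : set H) (Y : H -> X).
Hypotheses (Jc : continuous J) (dense_imY : dense (Y @` D))
  (JY : forall f, D f -> J (Y f) = f).

Lemma closure_inv_graph_on : closure (inv_graph_on D Y) = graph_on setT J.
Proof.
have -> : inv_graph_on D Y = (fun u => (u, J u)) @` (Y @` D).
  apply/seteqP; split=> [_ [f Df ->]|_ [_ [f Df <-] <-]].
    by exists (Y f); [exists f | rewrite JY].
  by exists f; rewrite ?JY.
have -> : graph_on setT J = range (fun u => (u, J u)).
  by apply/seteqP; split=> [_ [u _ ->]|_ [u _ <-]]; exists u.
apply: closure_image_dense => //.
  by move=> u; apply: cvg_pair => //; exact: Jc.
have -> : range (fun u => (u, J u)) = [set p | J p.1 = p.2].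
  by apply/seteqP; split=> [_ [u _ <-] //|[u h] /= <-]; exists u.
apply: closed_eq_continuous => p; last exact: cvg_snd.
by apply: continuous_comp; [exact: cvg_fst | exact: Jc].
Qed.

Lemma closure_graph_on : closure (graph_on D Y) = inv_graph_on setT J.
Proof.
have -> : graph_on D Y = (fun u => (J u, u)) @` (Y @` D).
  apply/seteqP; split=> [_ [f Df ->]|_ [_ [f Df <-] <-]].
    by exists (Y f); [exists f | rewrite JY].
  by exists f; rewrite ?JY.
have -> : inv_graph_on setT J = range (fun u => (J u, u)).
  by apply/seteqP; split=> [_ [u _ ->]|_ [u _ <-]]; exists u.
apply: closure_image_dense => //.
  by move=> u; apply: cvg_pair => //; exact: Jc.
have -> : range (fun u => (J u, u)) = [set p | J p.2 = p.1].
  by apply/seteqP; split=> [_ [u _ <-] //|[h u] /= <-]; exists u.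
apply: closed_eq_continuous => p; last exact: cvg_fst.
by apply: continuous_comp; [exact: cvg_snd | exact: Jc].
Qed.
End DenseGraphClosure.

Section BoundedGraphClosure.
Variables (K : numFieldType) (H X : normedModType K) (D : set H) (T : H -> X)
  (c : K).
Hypotheses (c_ge0 : 0 <= c) (T_bound : forall f, D f -> `|T f| <= c * `|f|).

Lemma closure_graph_on_bound h u :
  closure (graph_on D T) (h, u) -> `|u| <= c * `|h|.
Proof.
move=> cl; apply/ler_addgt0Pr => e e_gt0.
have c1_gt0 : 0 < c + 1 by rewrite (le_lt_trans c_ge0) // ltrDl ltr01.
pose d := e / (c + 1).
have d_gt0 : 0 < d by rewrite divr_gt0.
have nbhs_hu : nbhs (h, u) (ball h d `*` ball u d).
  by exists (ball h d, ball u d) => //; split; exact: nbhsx_ballx.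
have [_ [[f Df ->] [/= hf uf]]] := cl _ nbhs_hu.
rewrite -ball_normE /= in hf; rewrite -ball_normE /= in uf.
have u_le : `|u| <= d + `|T f|.
  rewrite -{1}(subrK (T f) u); apply: le_trans (ler_normD _ _) _.
  by rewrite lerD2r ltW.
have f_le : `|f| <= d + `|h|.
  rewrite -{1}(subrK h f); apply: le_trans (ler_normD _ _) _.
  by rewrite lerD2r distrC ltW.
apply: (le_trans u_le); apply: (@le_trans _ _ (d + c * (d + `|h|))).
  by rewrite lerD2l; apply: le_trans (T_bound Df) _; exact: ler_wpM2l.
suff -> : d + c * (d + `|h|) = c * `|h| + e by [].
by rewrite /d; field; rewrite gt_eqF.
Qed.
End BoundedGraphClosure.

Lemma is_subspaceB (K : numDomainType) (V : lmodType K) (D : set V) f g :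
  is_subspace D -> D f -> D g -> D (f - g).
Proof.
by case=> _ DD DZ Df Dg; rewrite addrC -scaleN1r; apply: DD => //; exact: DZ.
Qed.

Lemma linear_onB (K : numDomainType) (V W : lmodType K) (D : set V)
    (T : V -> W) f g :
  linear_on D T -> D f -> D g -> T (f - g) = T f - T g.
Proof.
by move=> T_lin Df Dg; rewrite addrC -scaleN1r T_lin // scaleN1r addrC.
Qed.

Section BoundedGraphTotal.
Variables (K : numFieldType) (H : normedModType K) (X : completeNormedModType K)
  (D : set H) (T : H -> X) (c : K).
Hypotheses (c_ge0 : 0 <= c) (T_bound : forall f, D f -> `|T f| <= c * `|f|)
  (D_subspace : is_subspace D) (T_lin : linear_on D T) (D_dense : dense D).

Lemma cauchy_within_dense (h : H) : cauchy (T @ within D (nbhs h)).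
Proof.
apply: cauchy_exP => eps eps_gt0.
have c1_gt0 : 0 < c + 1 by rewrite (le_lt_trans c_ge0) // ltrDl ltr01.
pose d := eps / (c + 1) / 2.
have d_gt0 : 0 < d by rewrite !divr_gt0.
have clD : closure D h by rewrite dense_closureT.
have [f0 [Df0 hf0]] := clD _ (nbhsx_ballx h d d_gt0).
exists (T f0); apply: filterS (nbhsx_ballx h d d_gt0) => g hg Dg.
rewrite -ball_normE /= in hf0 hg; rewrite -ball_normE /=.
have f0g : `|f0 - g| <= d + d.
  rewrite -(subrKA h); apply: le_trans (ler_normD _ _) _.
  by rewrite distrC lerD ?ltW.
rewrite -(linear_onB T_lin Df0 Dg).
apply: le_lt_trans (T_bound (is_subspaceB D_subspace Df0 Dg)) _.
apply: le_lt_trans (ler_wpM2l c_ge0 f0g) _.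
have -> : eps = c * (d + d) + (d + d) by rewrite /d; field; rewrite gt_eqF.
by rewrite ltrDl addr_gt0.
Qed.

Lemma closure_graph_on_total (h : H) : exists u, closure (graph_on D T) (h, u).
Proof.
have clD : closure D h by rewrite dense_closureT.
have G_proper : ProperFilter (within D (nbhs h)) := within_nbhs_proper clD.
have T_cvg : cvg (T @ within D (nbhs h)).
  by apply: cauchy_cvg; exact: cauchy_within_dense.
exists (lim (T @ within D (nbhs h))); rewrite closureEcvg.
exists ((fun f => (f, T f)) @ within D (nbhs h)).
  exact: fmap_proper_filter.
split; first by apply: cvg_pair => //; exact: cvg_within.
by move=> A graphA; apply: nearW => f Df; apply: graphA; exists f.
Qed.
End BoundedGraphTotal.

Lemma closable_closure_graph (A B : topologicalType) (G : set (A * B))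
    (T : A -> B) :
  closure G = graph_on setT T -> closable G.
Proof. by rewrite /closable => -> a b1 b2 [x _ [-> ->]] [y _ [<- ->]]. Qed.

Lemma closable_closure_inv_graph (A B : topologicalType) (G : set (B * A))
    (T : A -> B) :
  closure G = inv_graph_on setT T -> closable G <-> injective T.
Proof.
rewrite /closable => ->; split=> [G_closable x y Txy | T_inj b a1 a2].
  by apply: (G_closable (T x)); [exists x | exists y; rewrite ?Txy].
by move=> [x _ [-> ->]] [y _ [Txy ->]]; exact: T_inj.
Qed.

Lemma bounded_onP (K : numFieldType) (U V : normedModType K) (D : set U)
    (T : U -> V) :
  bounded_on D T -> exists2 c, 0 <= c & forall x, D x -> `|T x| <= c * `|x|.
Proof.
move=> [C C_bound]; exists `|C| => // x Dx.
rewrite -[`|x|]normr_id -normrM ger0_norm; first exact: C_bound.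
exact: le_trans (normr_ge0 _) (C_bound x Dx).
Qed.

Lemma isomorphism_of_bounded_below (K : numFieldType) (U V : normedModType K)
    (J : {linear U -> V}) (c : K) :
  continuous J -> 0 <= c -> (forall u, `|u| <= c * `|J u|) ->
  (forall v, exists u, J u = v) -> isomorphism J.
Proof.
move=> Jc c_ge0 J_below J_surj.
have J_inj : injective J.
  move=> x y Jxy; apply/eqP; rewrite -subr_eq0 -normr_le0.
  apply: le_trans (J_below (x - y)) _.
  by rewrite linearB /= Jxy subrr normr0 mulr0.
have [S JS] := boolp.choice J_surj.
have S_lin : linear S by move=> a x y; apply: J_inj; rewrite linearP /= !JS.
pose S' : {linear V -> U} := HB.pack S (GRing.isLinear.Build _ _ _ _ _ S_lin).
split=> //; exists S'; split.
- apply: bounded_linear_continuous; apply/linear_boundedP.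
  exists c; split; first exact: ger0_real.
  move=> M cM v /=; apply: le_trans (J_below (S v)) _; rewrite JS.
  by apply: ler_wpM2r => //; exact: ltW.
- by move=> u /=; apply: J_inj; rewrite JS.
- by move=> v /=; rewrite JS.
Qed.

Lemma bounded_on_of_isomorphism (K : numFieldType) (U V : normedModType K)
    (J : {linear U -> V}) (D : set V) (Y : V -> U) :
  isomorphism J -> (forall f, D f -> J (Y f) = f) -> bounded_on D Y.
Proof.
move=> [_ [S [Sc JS _]]] JY.
have /linear_boundedP [M [_ S_bound]] := (linear_bounded_continuous S).2 Sc.
exists (M + 1) => f Df.
by rewrite -[Y f]JS JY //; apply: S_bound; rewrite ltrDl ltr01.
Qed.

Theorem mainTheorem3 (K : numClosedFieldType)
  (H X E : completeNormedModType K)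
  (ipH : H -> H -> K) (ipX : X -> X -> K) (ipE : E -> E -> K)
  (hH : is_hilbert ipH) (hX : is_hilbert ipX) (hE : is_hilbert ipE)
  (J : {linear X -> H}) (F : {linear X -> E}) (D : set H) (Y : H -> X)
  (hT : pullback_triple J F D Y) :
  (closable (inv_graph_on D Y) /\
   closure (inv_graph_on D Y) = graph_on setT (fun u : X => J u)) /\
  (closable (graph_on D Y) <-> injective J) /\
  (injective J ->
   closure (graph_on D Y) = inv_graph_on setT (fun u : X => J u)) /\
  (bounded_on D Y <-> isomorphism J).
Proof.
case: hT => [[Jc _] _ [D_subspace Y_lin D_dense _ dense_imY] _ JY].
have inv_graphE := closure_inv_graph_on Jc dense_imY JY.
have graphE := closure_graph_on Jc dense_imY JY.
split; first by split; [exact: closable_closure_graph inv_graphE|].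
split; first exact: closable_closure_inv_graph graphE.
split; first by move=> _; exact: graphE.
split=> [/bounded_onP [c c_ge0 Y_bound] | J_iso]; last first.
  exact: bounded_on_of_isomorphism J_iso JY.
apply: (isomorphism_of_bounded_below Jc c_ge0) => [u | h].
  by apply: (closure_graph_on_bound c_ge0 Y_bound); rewrite graphE; exists u.
have [u] := closure_graph_on_total c_ge0 Y_bound D_subspace Y_lin D_dense h.
by rewrite graphE => -[v _ [-> _]]; exists v.
Qed.
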